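(* Let $d\ge2$, $q\ge2$, $p\in\mathbb{Z}/q\mathbb{Z}$ with $\gcd(p,q)=1$, and let $\mathcal{O}_1,\dots,\mathcal{O}_n$ be pairwise distinct $\sigma_d$-rotational orbits, each with rotation number $p/q$. Let $A=\bigcup_{i=1}^n\mathcal{O}_i=\{u_0<\dots<u_{nq-1}\}$. Then $A$ is $\sigma_d$-rotational with $\sigma_d(u_j)=u_{j+np}$ for all $j\in\mathbb{Z}/nq\mathbb{Z}$ (rotation number $p/q$) if and only if the representative sequences of $\mathcal{O}_1,\dots,\mathcal{O}_n$ can be interlaced.
   Context: $\mathbb{T}=\mathbb{R}/\mathbb{Z}$, ordered by representatives in $[0,1)$; $\sigma_d(t)=dt$. A finite set $\{u_0<\dots<u_{N-1}\}$ is $\sigma_d$-rotational if $\sigma_d(u_j)=u_{j+P}$ for a fixed $0\ne P\in\mathbb{Z}/N\mathbb{Z}$; rotation number $P/N$. $q$-tuple notation: $(a_0,\dots,a_{q-1})$, $a_i\in\{0,\dots,d-1\}$, denotes the point with base-$d$ expansion $0.\overline{a_0\dots a_{q-1}}$, digit indices in $\mathbb{Z}/q\mathbb{Z}$. A $(d-1)$-sequence of length $k$ is a nondecreasing sequence of length $k$ with terms in $\{0,\dots,d-2\}$. Representative sequence: let $1\le p\le q-1$, $p^*$ the inverse of $p$ mod $q$, and let $\mathcal{O}$ be a $\sigma_d$-rotational orbit with rotation number $p/q$ whose least element is $t=(a_0,\dots,a_{q-1})$. Its representative sequence is $c_0,\dots,c_{q-1}$ with $c_k=a_{kp^*}$ for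 $0\le k\le q-p-1$ and $c_k=a_{kp^*}-1$ for $q-p\le k\le q-1$; it is a $(d-1)$-sequence of length $q$. Sequences $s_i=b^{(i)}_0,\dots,b^{(i)}_{q-1}$ ($1\le i\le n$) can be interlaced if for some relabeling (permutation) of the indices $i$, the sequence $b^{(1)}_0,\dots,b^{(n)}_0,b^{(1)}_1,\dots,b^{(n)}_1,\dots,b^{(1)}_{q-1},\dots,b^{(n)}_{q-1}$ is a $(d-1)$-sequence. *)

(* points of T = R/Z represented by reals in [0,1). *)
From HB Require Import structures.
From mathcomp Require Import all_boot all_order all_algebra.
From mathcomp Require Import fingroup perm reals.
Set Implicit Arguments. Unset Strict Implicit. Unset Printing Implicit Defensive.
Import Order.TTheory GRing.Theory Num.Theory.
Local Open Scope ring_scope.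

Definition sigma {R : realType} (d : nat) (x : R) : R :=
  d%:R * x - (Num.floor (d%:R * x))%:~R.

(* A finite set {u_0 < ... < u_{N-1}} of T, given as its strictly increasing
   list of representatives in [0,1), is sigma_d-rotational with
   sigma_d(u_j) = u_{j+P}, P nonzero in Z/NZ. *)
Definition rotational {R : realType} (d : nat) (u : seq R) (P : nat) : Prop :=
  [/\ sorted <%R u,
      all (fun x => (0 <= x) && (x < 1)) u,
      (P %% size u != 0)%N &
      forall j, (j < size u)%N ->
        sigma d (nth 0 u j) = nth 0 u ((j + P) %% size u)%N].

Definition is_orbit {R : realType} (d : nat) (u : seq R) : Prop :=
  exists x : R, forall y : R, y \in u <-> exists k : nat, y = iter k (sigma d) x.

Definition rot_orbit {R : realType} (d p q : nat) (u : seq R) : Prop :=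
  is_orbit d u /\
  exists P : nat, [/\ (P < size u)%N, rotational d u P &
     (P%:Q / (size u)%:Q = p%:Q / q%:Q)%R].

(* the point with base-d expansion 0.(a_0 ... a_{q-1}) repeated *)
Definition qtuple_val {R : realType} (d q : nat) (a : nat -> nat) : R :=
  (\sum_(i < q) (a i * d ^ (q - 1 - i))%N%:R) / ((d ^ q)%N%:R - 1).

(* c is the representative sequence (indices 0..q-1) of the orbit u,
   whose least element is head 0 u (u is sorted increasingly). *)
Definition rep_seq {R : realType} (d p q : nat) (u : seq R) (c : nat -> int) : Prop :=
  exists pstar : nat, ((p * pstar) %% q = 1)%N /\
  exists a : nat -> nat,
    [/\ (forall i, (i < q)%N -> (a i < d)%N),
        head 0 u = qtuple_val d q a &
        forall k, (k < q)%N ->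
          c k = if (k <= q - p - 1)%N then (a ((k * pstar) %% q)%N)%:Z
                else (a ((k * pstar) %% q)%N)%:Z - 1].

Definition dm1_seq (d len : nat) (b : nat -> int) : Prop :=
  forall m, (m < len)%N ->
    (0 <= b m) && (b m <= (d%:Z - 2)) /\ ((m.+1 < len)%N -> b m <= b m.+1).

Definition interlaceable (d q n : nat) (c : 'I_n -> nat -> int) : Prop :=
  exists s : {perm 'I_n},
    dm1_seq d (n * q)
      (fun m => match insub (m %% n)%N with
                | Some i => c (s i) (m %/ n)%N
                | None => 0
                end).
Arguments interlaceable : clear implicits.

From HB Require Import structures.
From mathcomp Require Import all_boot all_order all_algebra.
From mathcomp Require Import fingroup perm reals.
From mathcomp Require Import zify ring lra.
Set Implicit Arguments. Unset Strict Implicit. Unset Printing Implicit Defensive.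
Import Order.TTheory GRing.Theory Num.Theory.

(* Write F x = floor (d x), so that d x = F x + sigma_d x.  On an orbit
   x_0 < ... < x_{q-1} with rotation number p/q we have sigma_d x_k = x_{k+p}, so the
   q-tuple of x_0 is (F x_{ip})_i and the representative sequence is
   c_k = F x_k - [q - p <= k].  Interlacing the orbits along a permutation s lists
   their points as w_{i+nk} = k-th point of the (s i)-th orbit; then
   sigma_d w_m = w_{m+np} and the interlaced sequence is F w_m - [n(q-p) <= m].
   If A is rotational, s can be chosen so that w enumerates A increasingly; F is
   then nondecreasing along A and jumps at n(q-p), because sigma_d sends
   u_{n(q-p)-1} to the largest and u_{n(q-p)} to the least point of A.
   Conversely, if the interlaced sequence is a (d-1)-sequence, two consecutive points
   w_m, w_{m+1} either have different first digits, hence w_m < w_{m+1}, or are sent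
   by sigma_d to the consecutive pair at position m+np with their gap multiplied
   by d.  As sigma_d^q fixes A, a gap surviving q steps satisfies (d^q - 1) gap = 0,
   which is impossible for distinct points.  So w is increasing, hence it is the
   enumeration of A, and A is rotational. *)

Lemma coprime_modinv p q : 1 < q -> coprime p q -> exists pstar, p * pstar %% q = 1.
Proof.
move=> q_gt1 copq; have p_gt0 : 0 < p.
  by rewrite lt0n; apply: contraTneq copq => ->; rewrite /coprime gcd0n; lia.
case: (egcdnP q p_gt0) => km kn def_km _.
by exists km; rewrite mulnC def_km (eqP copq) modnMDl modn_small.
Qed.

Lemma modinv_mulK p q pstar k : p * pstar %% q = 1 -> k < q -> (k * pstar %% q) * p %% q = k.
Proof.
move=> inv_p k_lt_q.
by rewrite modnMml -mulnA [pstar * p]mulnC -modnMmr inv_p muln1 modn_small.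
Qed.

Lemma iter_addn_mod N s j a : a < N -> iter j (fun x => (x + s) %% N) a = (a + j * s) %% N.
Proof.
move=> a_lt_N; elim: j => [|j IHj]; first by rewrite addn0 modn_small.
by rewrite iterS IHj modnDml mulSn [s + _]addnC addnA.
Qed.

Lemma iter_addn_mod_id N s j a : a < N -> N %| j * s ->
  iter j (fun x => (x + s) %% N) a = a.
Proof.
by move=> a_lt_N /dvdnP[k def_js]; rewrite iter_addn_mod // def_js addnC modnMDl modn_small.
Qed.

Lemma modn_sub N x : N <= x < N + N -> x %% N = x - N.
Proof. by move=> /andP[le_Nx lt_x]; rewrite -{1}(subnK le_Nx) modnDr modn_small; lia. Qed.

Lemma ltn_radix n q i k : i < n -> k < q -> i + n * k < n * q.
Proof.
move=> lt_in lt_kq; have : n * k.+1 <= n * q by rewrite leq_mul2l lt_kq orbT.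
by rewrite mulnS; lia.
Qed.

Lemma leq_radix n t i k : i < n -> (n * t <= i + n * k) = (t <= k).
Proof.
move=> lt_in; apply/idP/idP => [le_tk | le_tk].
  rewrite leqNgt; apply/negP => lt_kt.
  have : n * k.+1 <= n * t by rewrite leq_mul2l lt_kt orbT.
  by rewrite mulnS; lia.
have : n * t <= n * k by rewrite leq_mul2l le_tk orbT.
lia.
Qed.

Lemma modn_radix n q i m : 0 < q -> i < n -> (i + n * m) %% (n * q) = i + n * (m %% q).
Proof.
move=> q_gt0 lt_in.
rewrite {1}(divn_eq m q) mulnDr addnCA mulnCA [n * q]mulnC modnMDl modn_small //.
by rewrite [q * n]mulnC ltn_radix // ltn_mod.
Qed.

Lemma radixP n q m : 0 < n -> m < n * q ->
  exists (i : 'I_n) k, k < q /\ m = i + n * k.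
Proof.
move=> n_gt0 lt_m; exists (Ordinal (ltn_pmod m n_gt0)), (m %/ n); split.
  by rewrite ltn_divLR // mulnC.
by rewrite /= {1}(divn_eq m n) addnC mulnC.
Qed.

Lemma modn_add_succ N P a : a.+1 < N -> P <= N -> (a.+1 < N - P) || (N - P <= a) ->
  (a.+1 + P) %% N = ((a + P) %% N).+1.
Proof.
move=> lt_aN le_PN /orP[lt_a|le_a]; first by rewrite !modn_small; lia.
by rewrite !modn_sub; lia.
Qed.

Lemma uniq_flatten_disjoint (T I : eqType) (f : I -> seq T) (l : seq I) :
  uniq l -> (forall i, uniq (f i)) -> (forall i j x, x \in f i -> x \in f j -> i = j) ->
  uniq (flatten (map f l)).
Proof.
elim: l => //= i l IHl /andP[il ul] uf disj.
rewrite cat_uniq uf IHl // andbT.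
apply/hasPn => x /flatten_mapP[j jl xj]; apply/negP => xi.
by move: il; rewrite (disj _ _ _ xi xj) jl.
Qed.

Lemma size_flatten_const (T I : Type) (f : I -> seq T) (l : seq I) q :
  (forall i, size (f i) = q) -> size (flatten (map f l)) = size l * q.
Proof. by move=> sz_f; elim: l => //= i l IHl; rewrite size_cat IHl sz_f mulSn. Qed.

Lemma sorted_map_iota (T : Type) (r : rel T) (w : nat -> T) m N :
  (forall a, m <= a -> a.+1 < m + N -> r (w a) (w a.+1)) ->
  sorted r (map w (iota m N)).
Proof.
elim: N m => [|[|N] IHN] m r_w //=.
apply/andP; split; first by apply: r_w; lia.
by apply: (IHN m.+1) => a le_a lt_a; apply: r_w; lia.
Qed.

Lemma digit_sum_hornern (a : nat -> nat) (d r : nat) :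
  \sum_(i < r.+1) a i * d ^ (r.+1 - 1 - i) = (\sum_(i < r) a i * d ^ (r - 1 - i)) * d + a r.
Proof.
rewrite big_ord_recr /= big_distrl /= subSS subn0 subnn expn0 muln1.
congr (_ + _); apply: eq_bigr => i _.
by rewrite -mulnA -expnSr; congr (_ * d ^ _); have := ltn_ord i; lia.
Qed.

Lemma eq_digits (d r : nat) (a b : nat -> nat) :
  (forall i, i < r -> a i < d) -> (forall i, i < r -> b i < d) ->
  \sum_(i < r) a i * d ^ (r - 1 - i) = \sum_(i < r) b i * d ^ (r - 1 - i) ->
  forall i, i < r -> a i = b i.
Proof.
elim: r => [|r IHr] a_lt b_lt //; rewrite !digit_sum_hornern => eq_ab.
have [ar_lt br_lt] := (a_lt r (ltnSn r), b_lt r (ltnSn r)).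
have d_gt0 : 0 < d by lia.
have eq_r : a r = b r.
  by move: (congr1 (modn^~ d) eq_ab); rewrite !modnMDl !modn_small.
move: (congr1 (divn^~ d) eq_ab); rewrite !divnMDl // !divn_small // !addn0 => eq_ab'.
move=> i; rewrite ltnS leq_eqVlt => /orP[/eqP -> //|lt_ir].
by apply: IHr => // j lt_jr; [apply: a_lt | apply: b_lt]; lia.
Qed.

Local Open Scope ring_scope.

Lemma digit_sum_horner (R : comPzRingType) (E : nat -> R) (D : R) r :
  \sum_(i < r.+1) E i * D ^+ (r.+1 - 1 - i) = (\sum_(i < r) E i * D ^+ (r - 1 - i)) * D + E r.
Proof.
rewrite big_ord_recr /= mulr_suml subSS subn0 subnn expr0 mulr1.
congr (_ + _); apply: eq_bigr => i _.
by rewrite -mulrA -exprSr; congr (_ * D ^+ _); have := ltn_ord i; lia.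
Qed.

Section FirstDigit.
Variables (R : realType) (d : nat).

Local Notation F x := (Num.floor (d%:R * x)).

Lemma sigmaE (x : R) : d%:R * x = (F x)%:~R + sigma d x.
Proof. by rewrite /sigma addrC subrK. Qed.

Lemma mulX_iter_sigma (x : R) r :
  d%:R ^+ r * x = \sum_(i < r) (F (iter i (sigma d) x))%:~R * d%:R ^+ (r - 1 - i)
                  + iter r (sigma d) x.
Proof.
elim: r => [|r IHr]; first by rewrite big_ord0 expr0 mul1r add0r.
rewrite (@digit_sum_horner R (fun i => (F (iter i (sigma d) x))%:~R)) exprSr.
rewrite -mulrA [_ * x]mulrC mulrA [_ * d%:R]mulrC IHr.
by rewrite mulrDr iterS /sigma; ring.
Qed.

Lemma floor_digit_range (x : R) : (0 < d)%N -> 0 <= x < 1 -> 0 <= F x /\ F x < d%:Z.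
Proof.
move=> d_gt0 /andP[x_ge0 x_lt1]; split; first by rewrite floor_ge_int /= mulr_ge0.
have : d%:R * x < d%:R * 1 :> R by rewrite ltr_pM2l ?ltr0n.
by rewrite mulr1 floor_lt_int -pmulrn.
Qed.

Lemma expn_sub1_neq0 q : (2 <= d)%N -> (0 < q)%N -> ((d ^ q)%N%:R - 1 : R) != 0.
Proof. by move=> d_ge2 q_gt0; rewrite subr_eq0 pnatr_eq1 -(expn0 d) eqn_exp2l; lia. Qed.

End FirstDigit.

Lemma rotational_iter (R : realType) d (u : seq R) P j k :
  rotational d u P -> (j < size u)%N ->
  iter k (sigma d) (nth 0 u j) = nth 0 u ((j + k * P) %% size u).
Proof.
case=> _ _ _ rot_u lt_j; have N_gt0 : (0 < size u)%N by lia.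
elim: k => [|k IHk]; first by rewrite mul0n addn0 modn_small.
rewrite iterS IHk rot_u ?ltn_mod // modnDml.
by congr (nth _ _ (_ %% _)); lia.
Qed.

Lemma rot_orbit_rotational (R : realType) d p q (O : seq R) :
  (0 < q)%N -> coprime p q -> rot_orbit d p q O -> size O = q /\ rotational d O p.
Proof.
move=> q_gt0 copq [[x orb_x] [P [lt_PN rotO ratio]]].
have N_gt0 : (0 < size O)%N by lia.
have uniqO : uniq O by case: rotO => sortO _ _ _; apply: (sorted_uniq lt_trans ltxx).
have [j0 lt_j0 def_x] : exists2 j0, (j0 < size O)%N & x = nth 0 O j0.
  have xO : x \in O by apply/orb_x; exists 0%N.
  by exists (index x O); rewrite ?index_mem ?nth_index.
have copPN : coprime P (size O).
  have next_in : nth 0 O ((j0 + 1) %% size O) \in O by rewrite mem_nth ?ltn_mod.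
  have [k0] := (orb_x _).1 next_in; rewrite def_x (rotational_iter _ rotO) // => /eqP.
  rewrite nth_uniq ?ltn_mod // eqn_modDl => /eqP eq_mod.
  move: (congr1 (modn^~ (gcdn P (size O))) eq_mod) => /=.
  rewrite !modn_dvdm ?dvdn_gcdr // (eqP (dvdn_mull k0 (dvdn_gcdl P (size O)))).
  by rewrite /coprime -dvdn1 /dvdn => ->.
have eq_ratio : (P * q = p * size O)%N.
  move/eqP: ratio; rewrite -!pmulrn eqr_div ?pnatr_eq0 -?lt0n //.
  by rewrite -!natrM eqr_nat => /eqP.
have szO : size O = q.
  have copNP : coprime (size O) P by rewrite coprime_sym.
  have copqp : coprime q p by rewrite coprime_sym.
  apply/eqP; rewrite eqn_dvd -(Gauss_dvdr q copNP) eq_ratio dvdn_mull //=.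
  by rewrite -(Gauss_dvdr (size O) copqp) -eq_ratio dvdn_mull.
suff <- : P = p by [].
by apply/eqP; rewrite -(eqn_pmul2r q_gt0) eq_ratio szO.
Qed.

Lemma rot_orbit_mem (R : realType) d p q (O : seq R) x :
  (1 < q)%N -> coprime p q -> rot_orbit d p q O -> x \in O ->
  forall y, y \in O <-> exists k, y = iter k (sigma d) x.
Proof.
move=> q_gt1 copq orbO xO y; have q_gt0 : (0 < q)%N by lia.
have [szO rotO] := rot_orbit_rotational q_gt0 copq orbO.
have [j0 lt_j0 ->] : exists2 j0, (j0 < q)%N & x = nth 0 O j0.
  by exists (index x O); rewrite ?nth_index // -szO index_mem.
split=> [yO|[k ->]]; last by rewrite (rotational_iter _ rotO) ?szO // mem_nth // szO ltn_mod.
have [pstar inv_p] := coprime_modinv q_gt1 copq.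
exists ((index y O + (q - j0)) * pstar)%N; rewrite (rotational_iter _ rotO) ?szO //.
rewrite -mulnA [(pstar * p)%N]mulnC -modnDmr -modnMmr inv_p muln1 modnDmr.
have lt_y : (index y O < q)%N by rewrite -szO index_mem.
have -> : (j0 + (index y O + (q - j0)) = index y O + q)%N by lia.
by rewrite modnDr modn_small // nth_index.
Qed.

Lemma rot_orbit_disjoint (R : realType) d p q n (O : 'I_n -> seq R) :
  (1 < q)%N -> coprime p q -> (forall i, rot_orbit d p q (O i)) ->
  (forall i j, O i =i O j -> i = j) ->
  forall i j x, x \in O i -> x \in O j -> i = j.
Proof.
move=> q_gt1 copq orbO distO i j x xi xj; apply: distO => y.
have memi := rot_orbit_mem q_gt1 copq (orbO i) xi y.
have memj := rot_orbit_mem q_gt1 copq (orbO j) xj y.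
by apply/idP/idP => [/memi/memj | /memj/memi].
Qed.

Lemma qtuple_val_inj (R : realType) d q (a b : nat -> nat) : (2 <= d)%N -> (0 < q)%N ->
  (forall i, (i < q)%N -> (a i < d)%N) -> (forall i, (i < q)%N -> (b i < d)%N) ->
  qtuple_val d q a = qtuple_val d q b :> R -> forall i, (i < q)%N -> a i = b i.
Proof.
move=> d_ge2 q_gt0 a_lt b_lt /(congr1 ( *%R^~ ((d ^ q)%N%:R - 1))).
rewrite /qtuple_val !divfK ?expn_sub1_neq0 // -!natr_sum => /eqP; rewrite eqr_nat => /eqP.
exact: eq_digits.
Qed.

Definition first_digit (R : realType) d (O : seq R) k : int := Num.floor (d%:R * nth 0 O k).

(* The paper's c_k = a_{k p^*}, read off directly from the orbit: the k p^*-th digit of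
   its least point is the first digit of its k-th point (head_qtuple_val). *)
Definition rep_seq_of (R : realType) d p q (O : seq R) k : int :=
  if (q - p <= k)%N then first_digit d O k - 1 else first_digit d O k.

Section RepresentativeSequence.
Variables (R : realType) (d p q : nat) (O : seq R).
Hypotheses (d_ge2 : (2 <= d)%N) (q_gt1 : (1 < q)%N) (lt_pq : (p < q)%N) (copq : coprime p q).
Hypothesis orbO : rot_orbit d p q O.

Lemma first_digit_range k : (k < q)%N -> 0 <= first_digit d O k < d%:Z.
Proof.
have [szO [_ in01 _ _]] := rot_orbit_rotational (ltnW q_gt1) copq orbO.
move=> lt_kq; have [] := @floor_digit_range R d (nth 0 O k) ltac:(lia).
  by apply: (allP in01); rewrite mem_nth // szO.
by move=> -> ->.
Qed.

Lemma head_qtuple_val :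
  head 0 O = qtuple_val d q (fun i => `|first_digit d O (i * p %% q)|%N).
Proof.
have q_gt0 : (0 < q)%N by lia.
have [szO rotO] := rot_orbit_rotational q_gt0 copq orbO.
have iter_head i : iter i (sigma d) (head 0 O) = nth 0 O (i * p %% q).
  by rewrite -nth0 (rotational_iter _ rotO) ?szO.
have := mulX_iter_sigma d (head 0 O) q; rewrite iter_head modnMr nth0 => expand.
apply: (mulIf (expn_sub1_neq0 R d_ge2 q_gt0)); rewrite /qtuple_val divfK ?expn_sub1_neq0 //.
rewrite natrX mulrBr mulr1 mulrC expand addrK.
apply: eq_bigr => i _; rewrite iter_head natrM natrX natr_absz ger0_norm //.
by case/andP: (first_digit_range (ltn_pmod (i * p) q_gt0)).
Qed.

Lemma rep_seq_split (x : int) k :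
  (if (q - p <= k)%N then x - 1 else x) = if (k <= q - p - 1)%N then x else x - 1.
Proof.
have -> : (k <= q - p - 1)%N = ~~ (q - p <= k)%N by apply/idP/idP => ?; lia.
by case: (q - p <= k)%N.
Qed.

Lemma rep_seq_rep_seq_of : rep_seq d p q O (rep_seq_of d p q O).
Proof.
have [pstar inv_p] := coprime_modinv q_gt1 copq.
exists pstar; split => //; exists (fun i => `|first_digit d O (i * p %% q)|%N); split.
- move=> i _; have /andP[] := first_digit_range (ltn_pmod (i * p) (ltnW q_gt1)); lia.
- exact: head_qtuple_val.
- move=> k lt_kq; rewrite /rep_seq_of modinv_mulK // gez0_abs ?rep_seq_split //.
  by case/andP: (first_digit_range lt_kq).
Qed.

Lemma rep_seq_uniq c : rep_seq d p q O c ->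
  forall k, (k < q)%N -> c k = rep_seq_of d p q O k.
Proof.
case=> pstar [inv_p [a [a_lt head_a def_c]]] k lt_kq.
have digit_lt i : (i < q)%N -> (`|first_digit d O (i * p %% q)| < d)%N.
  move=> _; have /andP[] := first_digit_range (ltn_pmod (i * p) (ltnW q_gt1)); lia.
have eq_a := qtuple_val_inj d_ge2 (ltnW q_gt1) a_lt digit_lt
  (etrans (esym head_a) head_qtuple_val).
rewrite def_c // eq_a ?ltn_mod ?(ltnW q_gt1) // modinv_mulK // /rep_seq_of gez0_abs.
  by rewrite rep_seq_split.
by case/andP: (first_digit_range lt_kq).
Qed.

End RepresentativeSequence.

Section ExpandingDigits.
Variables (R : realType) (d N : nat) (w : nat -> R) (psi : nat -> nat) (G : nat -> int).
Hypotheses (d_gt0 : (0 < d)%N) (w_in01 : forall a, (a < N)%N -> 0 <= w a < 1).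
Hypothesis expand : forall a, (a < N)%N -> (psi a < N)%N /\ d%:R * w a = (G a)%:~R + w (psi a).
Hypothesis G_step : forall a, (a.+1 < N)%N ->
  G a <= G a.+1 /\ (G a = G a.+1 -> psi a.+1 = (psi a).+1).

Lemma expanding_gap a r : (a.+1 < N)%N -> w a < w a.+1 \/
  [/\ iter r psi a.+1 = (iter r psi a).+1, ((iter r psi a).+1 < N)%N &
      w (iter r psi a.+1) - w (iter r psi a) = d%:R ^+ r * (w a.+1 - w a)].
Proof.
move=> lt_a; elim: r => [|r [-> | []]]; [by right; rewrite expr0 mul1r | by left |].
rewrite !iterS; move: (iter r psi a) => b -> lt_b gap_b.
have [le_G eq_G] := G_step lt_b.
have [[psi_b exp_b] [psi_b1 exp_b1]] := (expand (ltnW lt_b), expand lt_b).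
have [/andP[wb_ge0 wb_lt1] /andP[wb1_ge0 wb1_lt1]] := (w_in01 psi_b, w_in01 psi_b1).
have d_pos : (0 : R) < d%:R by rewrite ltr0n.
have scaled : d%:R * (w b.+1 - w b) =
    ((G b.+1)%:~R - (G b)%:~R) + (w (psi b.+1) - w (psi b)).
  by rewrite mulrBr exp_b exp_b1; ring.
case: (eqVneq (G b) (G b.+1)) => [eqG | neG].
  right; rewrite (eq_G eqG); split => //; first by rewrite -(eq_G eqG).
  by rewrite -(eq_G eqG) exprS -mulrA -gap_b scaled eqG subrr add0r.
left; have lt_G : G b < G b.+1 by rewrite lt_neqAle neG.
have le_G1 : ((G b)%:~R : R) + 1 <= (G b.+1)%:~R.
  have : ((G b + 1)%:~R : R) <= (G b.+1)%:~R by rewrite ler_int; lia.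
  by rewrite intrD.
have : 0 < w b.+1 - w b by rewrite -(pmulr_rgt0 _ d_pos) scaled; lra.
by rewrite gap_b pmulr_rgt0 ?exprn_gt0 // subr_gt0.
Qed.

Lemma expanding_increasing K a : (1 < d)%N -> (0 < K)%N ->
  (forall a, (a < N)%N -> iter K psi a = a) -> (a.+1 < N)%N -> w a != w a.+1 -> w a < w a.+1.
Proof.
move=> d_gt1 K_gt0 psi_K lt_a ne_w.
have [// | [_ _]] := expanding_gap K lt_a; rewrite !psi_K ?(ltnW lt_a) // => gap.
have dK_neq1 : (d%:R : R) ^+ K != 1 by rewrite -natrX pnatr_eq1 -(expn0 d) eqn_exp2l; lia.
have : (d%:R ^+ K - 1) * (w a.+1 - w a) = 0 by rewrite mulrBl -gap mul1r subrr.
by move/eqP; rewrite mulf_eq0 subr_eq0 (negbTE dK_neq1) subr_eq0 eq_sym (negbTE ne_w).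
Qed.

End ExpandingDigits.

Lemma eq_dm1_seq d N (b b' : nat -> int) : (forall m, (m < N)%N -> b m = b' m) ->
  dm1_seq d N b -> dm1_seq d N b'.
Proof.
move=> eq_b dm1_b m lt_m; have [range step] := dm1_b m lt_m.
by rewrite -eq_b //; split => // lt_m1; rewrite -(eq_b m.+1) // step.
Qed.

Lemma dm1_seq_drop d N T (E : nat -> int) : (0 < T < N)%N ->
  (forall m, (m < N)%N -> 0 <= E m < d%:Z) ->
  (forall m m', (m <= m' < N)%N -> E m <= E m') -> E T.-1 < E T ->
  dm1_seq d N (fun m => if (T <= m)%N then E m - 1 else E m).
Proof.
move=> /andP[T_gt0 lt_TN] E_range E_mono jump m lt_m.
have /andP[Em_ge0 Em_lt] := E_range m lt_m.
have /andP[ET1_ge0 _] := E_range T.-1 ltac:(lia).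
have /andP[_ ET_lt] := E_range T lt_TN.
split.
  apply/andP; case: (leqP T m) => [le_Tm | lt_mT].
    by have := E_mono T m ltac:(lia); split; lia.
  by have := E_mono m T.-1 ltac:(lia); split; lia.
move=> lt_m1; have := E_mono m m.+1 ltac:(lia).
case: (leqP T m) => le_Tm; first by rewrite (leqW le_Tm) /=; lia.
case: (leqP T m.+1) => //= le_Tm1.
by move: jump; rewrite (_ : T = m.+1) /=; lia.
Qed.

Lemma dm1_seq_step d N T (G : nat -> int) a :
  dm1_seq d N (fun m => if (T <= m)%N then G m - 1 else G m) -> (a.+1 < N)%N ->
  G a <= G a.+1 /\ (G a = G a.+1 -> (a.+1 < T)%N || (T <= a)%N).
Proof.
move=> dm1_G lt_a; have [_ /(_ lt_a)] := dm1_G a (ltnW lt_a).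
by case: (leqP T a) => le_Ta; case: (leqP T a.+1) => le_Ta1 //=; lia.
Qed.

Lemma sorted_floor_mono (R : realType) d (u : seq R) m m' :
  sorted <%R u -> (m <= m' < size u)%N ->
  Num.floor (d%:R * nth 0 u m) <= Num.floor (d%:R * nth 0 u m').
Proof.
move=> sorted_u /andP[le_mm' lt_m']; apply: le_floor; rewrite ler_wpM2l ?ler0n //.
by rewrite (lt_sorted_leq_nth 0 sorted_u) ?inE //; exact: leq_ltn_trans le_mm' lt_m'.
Qed.

(* sigma_d sends u_{N-P-1} to the largest point and u_{N-P} to the least one. *)
Lemma rotational_floor_jump (R : realType) d (u : seq R) P : (0 < d)%N ->
  rotational d u P -> (0 < P < size u)%N ->
  Num.floor (d%:R * nth 0 u (size u - P).-1) < Num.floor (d%:R * nth 0 u (size u - P)).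
Proof.
move=> d_gt0 [sorted_u _ _ rot_u] /andP[P_gt0 lt_PN].
have lt_nth i j : (i < j < size u)%N -> nth 0 u i < nth 0 u j.
  move=> /andP[lt_ij lt_j].
  by rewrite (lt_sorted_ltn_nth 0 sorted_u) ?inE //; exact: ltn_trans lt_ij lt_j.
have sigma_last : sigma d (nth 0 u (size u - P).-1) = nth 0 u (size u).-1.
  by rewrite rot_u; [congr nth; rewrite modn_small | ]; lia.
have sigma_first : sigma d (nth 0 u (size u - P)) = nth 0 u 0.
  by rewrite rot_u ?subnK ?modnn //; lia.
have := sigmaE d (nth 0 u (size u - P).-1); have := sigmaE d (nth 0 u (size u - P)).
rewrite sigma_last sigma_first => exp_first exp_last.
have : d%:R * nth 0 u (size u - P).-1 < d%:R * nth 0 u (size u - P) :> R.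
  by rewrite ltr_pM2l ?ltr0n // lt_nth //; lia.
have := lt_nth 0%N (size u).-1 ltac:(lia).
by rewrite -(ltr_int R); lra.
Qed.

(* [interlaceable d q n c] unfolds to [exists s, dm1_seq d (n * q) (interlace 0 s c)]. *)
Definition interlace (T : Type) n (x0 : T) (s : {perm 'I_n}) (f : 'I_n -> nat -> T) m : T :=
  match insub (m %% n)%N with Some i => f (s i) (m %/ n)%N | None => x0 end.

Lemma interlace_radix (T : Type) n (x0 : T) (s : {perm 'I_n}) f (i : 'I_n) k :
  interlace x0 s f (i + n * k) = f (s i) k.
Proof.
have lt_in := ltn_ord i; have n_gt0 : (0 < n)%N by lia.
rewrite /interlace mulnC addnC modnMDl modn_small // divnMDl // divn_small // addn0.
by rewrite valK.
Qed.

Section Interlacing.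
Variables (R : realType) (d p q n : nat) (O : 'I_n -> seq R).
Hypotheses (d_ge2 : (2 <= d)%N) (q_gt1 : (1 < q)%N) (p_gt0 : (0 < p)%N) (lt_pq : (p < q)%N).
Hypotheses (copq : coprime p q) (n_gt0 : (0 < n)%N).
Hypotheses (orbO : forall i, rot_orbit d p q (O i)) (distO : forall i j, O i =i O j -> i = j).

Let orbitO i := rot_orbit_rotational (ltnW q_gt1) copq (orbO i).

Lemma size_orbit_union u : uniq u -> (forall x, x \in u = [exists i, x \in O i]) ->
  size u = (n * q)%N.
Proof.
move=> uniq_u mem_u.
have uniqO i : uniq (O i).
  by have [_ [sortO _ _ _]] := orbitO i; apply: (sorted_uniq lt_trans ltxx).
have perm_u : perm_eq u (flatten (map O (enum 'I_n))).
  apply: uniq_perm => //.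
    exact: uniq_flatten_disjoint (enum_uniq _) uniqO (rot_orbit_disjoint q_gt1 copq orbO distO).
  move=> x; rewrite mem_u; apply/existsP/flatten_mapP => [[i xi] | [i _ xi]].
    by exists i; rewrite ?mem_enum.
  by exists i.
by rewrite (perm_size perm_u) (@size_flatten_const _ _ O _ q (fun i => (orbitO i).1)) size_enum_ord.
Qed.

Section FixedPermutation.
Variable s : {perm 'I_n}.

Local Notation w := (interlace 0 s (fun i => nth 0 (O i))).
Local Notation ws := (map w (iota 0 (n * q))).

Lemma nth_interlace m : (m < n * q)%N -> nth 0 ws m = w m.
Proof. by move=> lt_m; rewrite (nth_map 0%N) ?size_iota ?nth_iota. Qed.

Lemma interlace_in01 m : (m < n * q)%N -> 0 <= w m < 1.
Proof.
move=> /(radixP n_gt0) [i [k [lt_kq ->]]]; rewrite interlace_radix.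
have [szO [_ in01 _ _]] := orbitO (s i).
by apply: (allP in01); rewrite mem_nth // szO.
Qed.

Lemma sigma_interlace m : (m < n * q)%N -> sigma d (w m) = w ((m + n * p) %% (n * q)).
Proof.
move=> /(radixP n_gt0) [i [k [lt_kq ->]]].
have [szO [_ _ _ rotO]] := orbitO (s i).
by rewrite -addnA -mulnDr modn_radix ?(ltnW q_gt1) // !interlace_radix rotO ?szO.
Qed.

Lemma interlace_inj m m' : (m < n * q)%N -> (m' < n * q)%N -> w m = w m' -> m = m'.
Proof.
move=> /(radixP n_gt0) [i [k [lt_kq ->]]] /(radixP n_gt0) [i' [k' [lt_kq' ->]]].
rewrite !interlace_radix => eq_w.
have [[szO [sortO _ _ _]] [szO' _]] := (orbitO (s i), orbitO (s i')).
have xi : nth 0 (O (s i)) k \in O (s i) by rewrite mem_nth // szO.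
have xi' : nth 0 (O (s i)) k \in O (s i') by rewrite eq_w mem_nth // szO'.
have eq_i := perm_inj (rot_orbit_disjoint q_gt1 copq orbO distO xi xi'); subst i'.
move/eqP: eq_w; rewrite nth_uniq ?szO // => [/eqP -> //|].
exact: (sorted_uniq lt_trans ltxx).
Qed.

Lemma mem_interlace x : [exists i, x \in O i] = (x \in ws).
Proof.
apply/existsP/mapP => [[j xj] | [m]].
  have [szO _] := orbitO j.
  exists ((s^-1)%g j + n * index x (O j))%N; last by rewrite interlace_radix permKV nth_index.
  by rewrite mem_iota /= ltn_radix // -szO index_mem.
rewrite mem_iota /= => /(radixP n_gt0) [i [k [lt_kq ->]]] ->.
have [szO _] := orbitO (s i).
by exists (s i); rewrite interlace_radix mem_nth // szO.
Qed.

Lemma interlace_rep_seq_of m : (m < n * q)%N ->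
  interlace 0 s (fun i => rep_seq_of d p q (O i)) m =
  if (n * q - n * p <= m)%N then Num.floor (d%:R * w m) - 1 else Num.floor (d%:R * w m).
Proof.
by move=> /(radixP n_gt0) [i [k [lt_kq ->]]]; rewrite !interlace_radix -mulnBr leq_radix.
Qed.

Lemma interlace_rep_seq_uniq c m : (forall i, rep_seq d p q (O i) (c i)) -> (m < n * q)%N ->
  interlace 0 s c m = interlace 0 s (fun i => rep_seq_of d p q (O i)) m.
Proof.
move=> rep_c /(radixP n_gt0) [i [k [lt_kq ->]]]; rewrite !interlace_radix.
exact: (rep_seq_uniq d_ge2 q_gt1 lt_pq copq).
Qed.

Lemma interlace_enum u : sorted <%R u -> (forall x, x \in u = [exists i, x \in O i]) ->
  sorted <%R ws -> u = ws.
Proof.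
move=> sorted_u mem_u sorted_w.
by apply: (irr_sorted_eq lt_trans ltxx) => // x; rewrite mem_u mem_interlace.
Qed.

Lemma rotational_interlace : sorted <%R ws -> rotational d ws (n * p).
Proof.
move=> sorted_w; split => //; rewrite ?size_map ?size_iota.
- by apply/allP => x /mapP [m]; rewrite mem_iota /= => /interlace_in01 ? ->.
- by rewrite modn_small ?ltn_pmul2l // -lt0n muln_gt0 n_gt0.
- by move=> m lt_m; rewrite !nth_interlace ?ltn_mod ?sigma_interlace // muln_gt0 n_gt0; lia.
Qed.

Lemma sorted_interlace_of_dm1 :
  dm1_seq d (n * q) (interlace 0 s (fun i => rep_seq_of d p q (O i))) ->
  sorted <%R ws.
Proof.
move=> dm1_w; apply: sorted_map_iota => a _ lt_a.
pose psi m := ((m + n * p) %% (n * q))%N.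
pose G m := Num.floor (d%:R * w m).
have nq_gt0 : (0 < n * q)%N by rewrite muln_gt0 n_gt0; lia.
have expand m : (m < n * q)%N -> (psi m < n * q)%N /\ d%:R * w m = (G m)%:~R + w (psi m).
  by move=> lt_m; rewrite ltn_mod sigmaE sigma_interlace.
have G_step m : (m.+1 < n * q)%N -> G m <= G m.+1 /\ (G m = G m.+1 -> psi m.+1 = (psi m).+1).
  move=> lt_m; have [le_G eq_G] := dm1_seq_step (eq_dm1_seq interlace_rep_seq_of dm1_w) lt_m.
  split=> // /eq_G side; apply: modn_add_succ => //.
  by rewrite leq_mul2l ltnW ?orbT.
have psi_q m : (m < n * q)%N -> iter q psi m = m.
  by move=> lt_m; apply: iter_addn_mod_id; rewrite // mulnA [(q * n)%N]mulnC dvdn_mulr.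
have ne_w : w a != w a.+1 by apply/eqP => /interlace_inj; lia.
exact: (@expanding_increasing R d (n * q) w psi G ltac:(lia) interlace_in01 expand G_step
  q a ltac:(lia) ltac:(lia) psi_q lt_a ne_w).
Qed.

Lemma dm1_interlace_of_rotational : rotational d ws (n * p) ->
  dm1_seq d (n * q) (interlace 0 s (fun i => rep_seq_of d p q (O i))).
Proof.
move=> rot_w; have [sorted_w in01 _ _] := rot_w.
have sz_w : size ws = (n * q)%N by rewrite size_map size_iota.
have lt_npq : (n * p < n * q)%N by rewrite ltn_pmul2l.
apply: (@eq_dm1_seq _ _ (fun m => if (n * q - n * p <= m)%N
    then Num.floor (d%:R * nth 0 ws m) - 1 else Num.floor (d%:R * nth 0 ws m))).
  by move=> m lt_m; rewrite interlace_rep_seq_of // nth_interlace.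
apply: dm1_seq_drop.
- by rewrite subn_gt0 lt_npq ltn_subrL !muln_gt0 n_gt0 p_gt0 (ltnW q_gt1).
- move=> m lt_m; apply/andP; apply: floor_digit_range; first lia.
  by apply: (allP in01); rewrite mem_nth // sz_w.
- by move=> m m' lt_mm'; apply: sorted_floor_mono; rewrite // sz_w.
- move: (rotational_floor_jump (ltnW d_ge2) rot_w); rewrite sz_w; apply.
  by rewrite lt_npq muln_gt0 n_gt0 p_gt0.
Qed.

End FixedPermutation.

Section RotationalUnion.
Variable u : seq R.
Hypotheses (mem_u : forall x, x \in u = [exists i, x \in O i]) (rot_u : rotational d u (n * p)).

Lemma size_rotational_union : size u = (n * q)%N.
Proof.
case: rot_u => sorted_u _ _ _; apply: size_orbit_union mem_u.
exact: (sorted_uniq lt_trans ltxx).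
Qed.

Lemma orbit_column (i : 'I_n) j : nth 0 u i \in O j ->
  O j = map (fun k => nth 0 u (i + n * k)) (iota 0 q).
Proof.
move=> ui_in; have [sorted_u _ _ _] := rot_u; have sz_u := size_rotational_union.
have lt_in := ltn_ord i.
have lt_col k : (k < q)%N -> (i + n * k < size u)%N by rewrite sz_u; apply: ltn_radix.
have lt_iN : (i < n * q)%N by rewrite (leq_trans lt_in) // leq_pmulr; lia.
have iter_ui k : iter k (sigma d) (nth 0 u i) = nth 0 u (i + n * (k * p %% q)).
  by rewrite (rotational_iter _ rot_u) ?sz_u // mulnCA modn_radix //; lia.
have [szO [sortO _ _ _]] := orbitO j.
apply: (irr_sorted_eq lt_trans ltxx sortO).
  apply: sorted_map_iota => k _ lt_k; rewrite (lt_sorted_ltn_nth 0 sorted_u) ?inE.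
  - by rewrite ltn_add2l ltn_pmul2l.
  - by apply: lt_col; lia.
  - by apply: lt_col; lia.
move=> y; apply/idP/mapP => [yO | [k]].
  have [k ->] := (rot_orbit_mem q_gt1 copq (orbO j) ui_in y).1 yO.
  exists (k * p %% q)%N; last exact: iter_ui.
  by rewrite mem_iota /= ltn_mod; lia.
rewrite mem_iota /= => lt_k ->.
have [pstar inv_p] := coprime_modinv q_gt1 copq.
apply/(rot_orbit_mem q_gt1 copq (orbO j) ui_in _).2; exists (k * pstar)%N.
by rewrite iter_ui -modnMml modinv_mulK.
Qed.

Lemma interlace_of_rotational :
  exists s : {perm 'I_n}, u = map (interlace 0 s (fun i => nth 0 (O i))) (iota 0 (n * q)).
Proof.
have [sorted_u _ _ _] := rot_u; have sz_u := size_rotational_union.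
have uniq_u : uniq u by apply: (sorted_uniq lt_trans ltxx).
have lt_iN (i : 'I_n) : (i < size u)%N.
  by rewrite sz_u (leq_trans (ltn_ord i)) // leq_pmulr; lia.
have orbit_ui (i : 'I_n) : exists j, nth 0 u i \in O j by apply/existsP; rewrite -mem_u mem_nth.
pose s0 i := xchoose (orbit_ui i).
have col i : O (s0 i) = map (fun k => nth 0 u (i + n * k)) (iota 0 q).
  exact: orbit_column (xchooseP (orbit_ui i)).
have s0_inj : injective s0.
  move=> i i' eq_s; have : nth 0 u i' \in O (s0 i) by rewrite eq_s (xchooseP (orbit_ui i')).
  rewrite col => /mapP [k]; rewrite mem_iota /= => lt_k /eqP.
  rewrite nth_uniq ?lt_iN ?sz_u ?ltn_radix // => /eqP eq_i.
  have lt_i' := ltn_ord i'; apply: val_inj => /=.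
  by case: k eq_i {lt_k} => [|k]; rewrite ?muln0 ?addn0 ?mulnS; lia.
exists (perm s0_inj); apply: (@eq_from_nth _ 0); first by rewrite size_map size_iota.
move=> m; rewrite sz_u => /(radixP n_gt0) [i [k [lt_k ->]]].
rewrite (nth_map 0%N) ?size_iota ?nth_iota ?ltn_radix // interlace_radix permE col.
by rewrite (nth_map 0%N) ?size_iota ?nth_iota.
Qed.

End RotationalUnion.
End Interlacing.

Theorem corollary3p3 (R : realType) (d q p n : nat)
  (hd : (2 <= d)%N) (hq : (2 <= q)%N) (hp0 : (0 < p)%N) (hpq : (p < q)%N)
  (hcop : coprime p q) (hn : (0 < n)%N)
  (O : 'I_n -> seq R)
  (hO : forall i, rot_orbit d p q (O i))
  (hdist : forall i j, O i =i O j -> i = j)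
  (u : seq R) (hu : sorted <%R u)
  (hA : forall x, x \in u = [exists i, x \in O i]) :
  rotational d u (n * p)%N <->
  exists c : 'I_n -> nat -> int,
    (forall i, rep_seq d p q (O i) (c i)) /\ interlaceable d q n c.
Proof.
split=> [rot_u | [c [rep_c [s dm1_c]]]].
  have [s def_u] := interlace_of_rotational hd hq hp0 hpq hcop hn hO hdist hA rot_u.
  exists (fun i => rep_seq_of d p q (O i)); split.
    by move=> i; exact: rep_seq_rep_seq_of hd hq hpq hcop (hO i).
  by exists s; apply: (dm1_interlace_of_rotational hd hq hp0 hpq hcop hn); rewrite -def_u.
have dm1_w : dm1_seq d (n * q) (interlace 0 s (fun i => rep_seq_of d p q (O i))).
  exact: eq_dm1_seq (fun m => interlace_rep_seq_uniq hd hq hpq hcop hn hO s rep_c) dm1_c.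
have sorted_w := sorted_interlace_of_dm1 hd hq hp0 hpq hcop hn hO hdist dm1_w.
rewrite (interlace_enum hq hcop hn hO hu hA sorted_w).
exact: rotational_interlace.
Qed.
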